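(* Suppose outcomes are observed under a balanced $K$-cluster randomized design $\mathcal{D}(\mathcal{C})$ and the potential outcomes have the form $Y_i(\mathbf{Z})=g_i(Z_i,e_i(\mathbf{Z}))$, where for each $i$ and each $Z\in\{-1,1\}$ the function $e\mapsto g_i(Z,e)$ is $L$-Lipschitz on $[-1,1]$ (with $L>0$). Then $$\left|\mathbb{E}[\widehat\tau_{DIM}]-\tau^*\right|\le \frac{2}{N}\cdot\frac{K}{K-1}\,L\,\mathcal{H}(\mathcal{C}),$$ where $\tau^*=\frac1N\sum_{i}\big(g_i(1,1)-g_i(-1,-1)\big)$. Furthermore, this bound is attained (by $g_i(Z,e)=Le$ for all $i$), and consequently, among all partitions of $[N]$ into $K$ equally sized clusters (with $K,K_T$ fixed), the set of minimizers of $\max_{\{g_i\}}\left|\mathbb{E}[\widehat\tau_{DIM}]-\tau^*\right|$, the maximum taken over all families $\{g_i\}$ of functions that are $L$-Lipschitz in $e$, equals the set of minimizers of $\mathcal{H}(\mathcal{C})$.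
   Context: Setting: $N$ experimental units $[N]$, $M$ interference units $[M]$, weights $w_{is}\ge0$ with $\sum_s w_{is}>0$ for all $i$ and $\sum_i w_{is}>0$ for all $s$. For $\mathbf{Z}\in\{-1,1\}^N$: dose $d_s=\frac{\sum_i w_{is}Z_i}{\sum_i w_{is}}$, exposure $e_i(\mathbf{Z})=\frac{\sum_s w_{is}d_s}{\sum_s w_{is}}\in[-1,1]$. Balanced $K$-cluster randomized design $\mathcal{D}(\mathcal{C})$: $K\ge2$ divides $N$, $\mathcal{C}$ partitions $[N]$ into $K$ clusters of size $N/K$, $\mathcal{C}(i)$ is the cluster of $i$; $K_T$ clusters ($0<K_T<K$) chosen uniformly at random are treated ($Z_i=1$), the rest are control ($Z_i=-1$). $N_T=NK_T/K$, $N_C=N-N_T$; $\widehat\tau_{DIM}=\frac{1}{N_T}\sum_{i:Z_i=1}Y_i-\frac{1}{N_C}\sum_{i:Z_i=-1}Y_i$. $\mathcal{H}(\mathcal{C})=\sum_{i\in[N]}\sum_{j\in[N]\setminus\mathcal{C}(i)}\sum_{s\in[M]}\frac{w_{is}}{\sum_{s'} w_{is'}}\frac{w_{js}}{\sum_{k} w_{ks}}$. *)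

From HB Require Import structures.
From mathcomp Require Import all_boot all_order all_algebra.
From mathcomp Require Import boolp classical_sets reals.
Set Implicit Arguments. Unset Strict Implicit. Unset Printing Implicit Defensive.
Import Order.TTheory GRing.Theory Num.Theory.
Local Open Scope ring_scope.
Local Open Scope classical_set_scope.

Section Defs.
Variables (R : realType) (N M K : nat).
Variable w : 'I_N -> 'I_M -> R.

Definition dose (Z : 'I_N -> R) (s : 'I_M) : R :=
  (\sum_(i < N) w i s * Z i) / (\sum_(i < N) w i s).

Definition exposure (Z : 'I_N -> R) (i : 'I_N) : R :=
  (\sum_(s < M) w i s * dose Z s) / (\sum_(s < M) w i s).

(* A clustering of [N] into K (labelled) clusters: cluster map C(i) := c i.
   It is balanced when every cluster has exactly N/K units. *)
Definition balanced (c : 'I_N -> 'I_K) : Prop :=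
  forall k : 'I_K, #|[set i | c i == k]| = (N %/ K)%N.

Definition assign (c : 'I_N -> 'I_K) (T : {set 'I_K}) : 'I_N -> R :=
  fun i => if c i \in T then 1 else -1.

Definition outcome (g : 'I_N -> R -> R -> R) (Z : 'I_N -> R) (i : 'I_N) : R :=
  g i (Z i) (exposure Z i).

Definition NT (KT : nat) : R := N%:R * KT%:R / K%:R.
Definition NC (KT : nat) : R := N%:R - NT KT.

Definition dim_est (KT : nat) (g : 'I_N -> R -> R -> R) (Z : 'I_N -> R) : R :=
  (NT KT)^-1 * (\sum_(i < N | Z i == 1) outcome g Z i)
  - (NC KT)^-1 * (\sum_(i < N | Z i == -1) outcome g Z i).

(* expectation of the estimator under D(C): K_T of the K clusters,
   chosen uniformly at random, are treated *)
Definition expected_dim (c : 'I_N -> 'I_K) (KT : nat)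
    (g : 'I_N -> R -> R -> R) : R :=
  (\sum_(T : {set 'I_K} | #|T| == KT) dim_est KT g (assign c T))
  / #|[set T : {set 'I_K} | #|T| == KT]|%:R.

Definition tau_star (g : 'I_N -> R -> R -> R) : R :=
  N%:R^-1 * \sum_(i < N) (g i 1 1 - g i (-1) (-1)).

Definition Hc (c : 'I_N -> 'I_K) : R :=
  \sum_(i < N) \sum_(j < N | c j != c i) \sum_(s < M)
     (w i s / \sum_(s' < M) w i s') * (w j s / \sum_(k < N) w k s).

Definition lipschitz_family (L : R) (g : 'I_N -> R -> R -> R) : Prop :=
  forall (i : 'I_N) (z : R), (z = 1 \/ z = -1) ->
  forall x y : R, -1 <= x <= 1 -> -1 <= y <= 1 ->
    `|g i z x - g i z y| <= L * `|x - y|.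

Definition bias (c : 'I_N -> 'I_K) (KT : nat) (g : 'I_N -> R -> R -> R) : R :=
  `|expected_dim c KT g - tau_star g|.

Definition worst_bias (c : 'I_N -> 'I_K) (KT : nat) (L : R) : R :=
  sup [set b | exists g, lipschitz_family L g /\ b = bias c KT g].

End Defs.

From Pilot Require Import Defs.
From mathcomp Require Import all_boot all_order all_algebra.
From mathcomp Require Import classical_sets reals.
From mathcomp Require Import ring lra zify.
Import Order.TTheory GRing.Theory Num.Theory.
Local Open Scope ring_scope.

Set Implicit Arguments. Unset Strict Implicit. Unset Printing Implicit Defensive.

(* Averaging over the K_T-subsets T of treated clusters, unit i is treated
   with probability K_T / K, so the difference in means evaluated at the
   interference-free outcomes g_i(Z_i, Z_i) is unbiased for tau*.  The bias is
   thus an average of weighted errors g_i(Z_i, e_i) - g_i(Z_i, Z_i), each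
   bounded by L |e_i - Z_i| = L (1 - Z_i e_i), with equality and a common sign
   for g_i(Z, e) = L e.  Since e_i is a convex combination of the Z_j,
   1 - Z_i e_i = sum_j c_ij (1 - Z_i Z_j), and only units j in another cluster
   with the opposite treatment contribute; the two clusters are split in a
   given way with probability K_T (K - K_T) / (K (K - 1)), which yields the
   factor 2 K / (N (K - 1)) in front of H(C).  Hence the worst-case bias is a
   positive multiple of H(C). *)

Section Draws.
Variables (R : numFieldType) (I : finType) (m : nat).
Local Notation n := #|I|.

Lemma sum_draws_subset (A : {set I}) :
  \sum_(T : {set I} | #|T| == m) (T \subset A)%:R = 'C(#|A|, m)%:R :> R.
Proof.
rewrite -cards_draws -sumr_const big_mkcond [RHS]big_mkcond /=.
by apply: eq_bigr => T _; rewrite inE; case: (_ \subset _); case: (_ == _).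
Qed.

Lemma sum_draws_const (a : R) :
  \sum_(T : {set I} | #|T| == m) a = 'C(n, m)%:R * a.
Proof.
rewrite -cardsT -(sum_draws_subset [set: I]) mulr_suml.
by apply: eq_bigr => T _; rewrite finset.subsetT mul1r.
Qed.

Lemma sum_draws_notin (k : I) :
  \sum_(T : {set I} | #|T| == m) (k \notin T)%:R = 'C(n.-1, m)%:R :> R.
Proof.
rewrite -(cardsC1 k) -sum_draws_subset; apply: eq_bigr => T _.
by rewrite finset.subsetC finset.sub1set finset.in_setC.
Qed.

Lemma sum_draws_notin2 (k l : I) : k != l ->
  \sum_(T : {set I} | #|T| == m) ((k \notin T) && (l \notin T))%:R
  = 'C(n.-2, m)%:R :> R.
Proof.
move=> kl; have := cardsC [set k; l]; rewrite cards2 kl => card_kl.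
rewrite (_ : n.-2 = #|~: [set k; l]|); last by lia.
rewrite -sum_draws_subset; apply: eq_bigr => T _.
by rewrite finset.subsetC finset.subUset !finset.sub1set !finset.in_setC.
Qed.

Lemma sum_draws_notinE (k : I) :
  \sum_(T : {set I} | #|T| == m) (k \notin T)%:R
  = 'C(n, m)%:R * (1 - m%:R / n%:R) :> R.
Proof.
have n_gt0 : (0 < n)%N by apply/card_gt0P; exists k.
rewrite sum_draws_notin.
have [mn | nm] := leqP m n; last by rewrite !bin_small ?mul0r //; lia.
have n_neq0 : n%:R != 0 :> R by rewrite pnatr_eq0 -lt0n.
apply: (mulfI n_neq0); rewrite -natrM mul_bin_down natrM natrB //.
by field.
Qed.

Lemma sum_draws_ifE (k : I) (a b : R) :
  \sum_(T : {set I} | #|T| == m) (if k \in T then a else b)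
  = 'C(n, m)%:R * (m%:R / n%:R * a + (1 - m%:R / n%:R) * b).
Proof.
have split_if (T : {set I}) :
    (if k \in T then a else b) = a - (a - b) * (k \notin T)%:R.
  by case: (k \in T) => /=; ring.
under eq_bigr => T _ do rewrite split_if.
by rewrite sumrB -mulr_sumr sum_draws_notinE sum_draws_const; ring.
Qed.

Lemma sum_draws_in_notinE (k l : I) : k != l ->
  \sum_(T : {set I} | #|T| == m) ((k \in T) && (l \notin T))%:R
  = 'C(n, m)%:R * (m%:R * (n%:R - m%:R) / (n%:R * (n%:R - 1))) :> R.
Proof.
move=> kl.
have n_gt1 : (1 < n)%N by have := max_card [set k; l]; rewrite cards2 kl.
have split_in (T : {set I}) : ((k \in T) && (l \notin T))%:R
    = (l \notin T)%:R - ((k \notin T) && (l \notin T))%:R :> R.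
  by case: (k \in T); case: (l \in T) => /=; ring.
under eq_bigr => T _ do rewrite split_in.
rewrite sumrB sum_draws_notin sum_draws_notin2 //.
have [mn | nm] := ltnP m n; last first.
  rewrite (@bin_small n.-1) 1?(@bin_small n.-2) ?subrr; try lia.
  have [<- | nm'] := eqVneq n m; first by rewrite subrr mulr0 mul0r mulr0.
  by rewrite bin_small ?mul0r //; lia.
have n_neq0 : n%:R != 0 :> R by rewrite pnatr_eq0; lia.
have n1_neq0 : n%:R - 1 != 0 :> R by rewrite subr_eq0 pnatr_eq1; lia.
have predn_natr : n.-1%:R = n%:R - 1 :> R by rewrite -subn1 natrB //; lia.
have C1 : 'C(n.-1, m)%:R = (n%:R - m%:R) / n%:R * 'C(n, m)%:R :> R.
  apply: (mulfI n_neq0); rewrite -natrM mul_bin_down natrM natrB; last lia.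
  by field.
have C2 : 'C(n.-2, m)%:R
    = (n%:R - 1 - m%:R) / (n%:R - 1) * 'C(n.-1, m)%:R :> R.
  apply: (mulfI n1_neq0).
  rewrite -predn_natr -natrM mul_bin_down natrM natrB; last lia.
  by rewrite predn_natr; field.
by rewrite C2 C1; field; rewrite n_neq0 n1_neq0.
Qed.

End Draws.

Section Exposure.
Variables (R : realType) (N M : nat) (w : 'I_N -> 'I_M -> R).
Hypotheses (w_ge0 : forall i s, 0 <= w i s)
  (wi_gt0 : forall i, 0 < \sum_(s < M) w i s)
  (ws_gt0 : forall s, 0 < \sum_(i < N) w i s).

Definition exposure_weight (i j : 'I_N) : R := \sum_(s < M)
  (w i s / \sum_(s' < M) w i s') * (w j s / \sum_(k < N) w k s).

Lemma exposure_weight_ge0 i j : 0 <= exposure_weight i j.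
Proof.
by apply: sumr_ge0 => s _; apply: mulr_ge0; apply: divr_ge0 => //; apply: ltW.
Qed.

Lemma sum_exposure_weight i : \sum_j exposure_weight i j = 1.
Proof.
rewrite exchange_big /=.
under eq_bigr => s _ do
  rewrite -mulr_sumr -mulr_suml divff ?mulr1 ?lt0r_neq0 //.
by rewrite -mulr_suml divff // lt0r_neq0.
Qed.

Lemma exposureE Z i : exposure w Z i = \sum_j exposure_weight i j * Z j.
Proof.
rewrite /exposure /dose.
under [RHS]eq_bigr => j _ do rewrite mulr_suml.
rewrite [RHS]exchange_big /= mulr_suml; apply: eq_bigr => s _.
rewrite (mulrC (w i s)) -!mulrA mulr_suml; apply: eq_bigr => j _.
by field; rewrite !lt0r_neq0.
Qed.

Lemma one_sub_mul_exposure Z i :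
  1 - Z i * exposure w Z i = \sum_j exposure_weight i j * (1 - Z i * Z j).
Proof.
rewrite exposureE -{1}(sum_exposure_weight i) mulr_sumr -sumrB.
by apply: eq_bigr => j _; ring.
Qed.

Lemma exposure_in_range Z i : (forall j, -1 <= Z j <= 1) ->
  -1 <= exposure w Z i <= 1.
Proof.
move=> Z_range.
have weighted_ge0 (f : R -> R) : (forall x, -1 <= x <= 1 -> 0 <= f x) ->
    0 <= \sum_j exposure_weight i j * f (Z j).
  move=> f_ge0; apply: sumr_ge0 => j _.
  exact: mulr_ge0 (exposure_weight_ge0 i j) (f_ge0 _ (Z_range j)).
have add1_exposure : 1 + exposure w Z i
    = \sum_j exposure_weight i j * (1 + Z j).
  rewrite exposureE -{1}(sum_exposure_weight i) -big_split /=.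
  by apply: eq_bigr => j _; ring.
have sub1_exposure : 1 - exposure w Z i
    = \sum_j exposure_weight i j * (1 - Z j).
  rewrite exposureE -{1}(sum_exposure_weight i) -sumrB /=.
  by apply: eq_bigr => j _; ring.
apply/andP; split.
  rewrite -subr_ge0 opprK addrC add1_exposure.
  by apply: (weighted_ge0 (fun x => 1 + x)) => x /andP[]; lra.
rewrite -subr_ge0 sub1_exposure.
by apply: (weighted_ge0 (fun x => 1 - x)) => x /andP[]; lra.
Qed.

Lemma dist_exposure_sign Z i : (forall j, -1 <= Z j <= 1) ->
  Z i = 1 \/ Z i = -1 -> `|exposure w Z i - Z i| = 1 - Z i * exposure w Z i.
Proof.
move=> /(exposure_in_range i) /andP[e_ge e_le] [] ->.
  by rewrite distrC ger0_norm ?subr_ge0 // mul1r.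
by rewrite opprK ger0_norm; [ring | lra].
Qed.

Lemma Hc_ge0 K (c : 'I_N -> 'I_K) : 0 <= Hc w c.
Proof. by do 2 (apply: sumr_ge0 => ? _); exact: exposure_weight_ge0. Qed.

End Exposure.

Section Bias.
Variables (R : realType) (N M K KT : nat) (w : 'I_N -> 'I_M -> R).
Hypotheses (w_ge0 : forall i s, 0 <= w i s)
  (wi_gt0 : forall i, 0 < \sum_(s < M) w i s)
  (ws_gt0 : forall s, 0 < \sum_(i < N) w i s).
Hypotheses (K_ge2 : (2 <= K)%N) (KT_range : (0 < KT < K)%N).
Variable c : 'I_N -> 'I_K.

Local Notation Z := (assign R c).
Local Notation e T := (exposure w (assign R c T)).
Local Notation CK := ('C(K, KT)%:R : R).
Local Notation NT := (NT R N K KT).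
Local Notation NC := (NC R N K KT).
Local Notation bias_factor := (2 / N%:R * (K%:R / (K%:R - 1)) : R).

Definition dim_weight (T : {set 'I_K}) (i : 'I_N) : R :=
  if c i \in T then NT^-1 else NC^-1.

Lemma N_gt0 (i : 'I_N) : 0 < N%:R :> R.
Proof. by rewrite ltr0n (leq_ltn_trans _ (ltn_ord i)). Qed.

Lemma K_gt0 : 0 < K%:R :> R. Proof. by rewrite ltr0n; lia. Qed.
Lemma KT_gt0 : 0 < KT%:R :> R. Proof. by rewrite ltr0n; lia. Qed.
Lemma K_sub1_gt0 : 0 < K%:R - 1 :> R. Proof. by rewrite subr_gt0 ltr1n; lia. Qed.
Lemma CK_gt0 : 0 < CK. Proof. by rewrite ltr0n bin_gt0; lia. Qed.

Lemma K_sub_KT_gt0 : 0 < K%:R - KT%:R :> R.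
Proof. by rewrite subr_gt0 ltr_nat; lia. Qed.

Lemma NCE : NC = N%:R * (K%:R - KT%:R) / K%:R.
Proof. by rewrite /Defs.NC /Defs.NT; field; rewrite gt_eqF // K_gt0. Qed.

Lemma dim_weight_ge0 T i : 0 <= dim_weight T i.
Proof.
rewrite /dim_weight /Defs.NT NCE; case: (_ \in _);
  by rewrite invr_ge0 divr_ge0 ?mulr_ge0 ?ler0n ?ltW ?K_gt0 ?K_sub_KT_gt0.
Qed.

Lemma assign_sign T i : Z T i = 1 \/ Z T i = -1.
Proof. by rewrite /assign; case: (_ \in _); [left | right]. Qed.

Lemma assign_in_range T i : -1 <= Z T i <= 1.
Proof. by case: (assign_sign T i) => ->; apply/andP; split; lra. Qed.

Lemma oner_neqN1 : ((1 : R) == -1) = false.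
Proof. by apply/eqP; lra. Qed.

Lemma assign_eq1 T i : (Z T i == 1) = (c i \in T).
Proof.
by rewrite /assign; case: (_ \in _); rewrite ?eqxx // eq_sym oner_neqN1.
Qed.

Lemma assign_eqN1 T i : (Z T i == -1) = (c i \notin T).
Proof. by rewrite /assign; case: (_ \in _); rewrite ?eqxx // oner_neqN1. Qed.

Lemma card_draws_classic :
  #|[set T : {set 'I_K} | #|T| == KT]%classic|%:R = CK :> R.
Proof.
rewrite -[K in RHS]card_ord -card_draws; congr _%:R; apply: eq_card => T.
by rewrite inE; apply/idP/idP => [/set_mem | ?]; last exact: mem_set.
Qed.

Lemma dim_est_assign g T : dim_est K w KT g (Z T)
  = \sum_i Z T i * dim_weight T i * outcome w g (Z T) i.
Proof.
rewrite /dim_est (eq_bigl _ _ (assign_eq1 T)) (eq_bigl _ _ (assign_eqN1 T)).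
rewrite [RHS](bigID (fun i => c i \in T)) /= !mulr_sumr -sumrN.
rewrite /dim_weight; congr (_ + _); apply: eq_bigr => i i_in.
  by rewrite i_in (_ : Z T i = 1) ?mul1r // /assign i_in.
by rewrite (negPf i_in) (_ : Z T i = -1) ?mulN1r ?mulNr // /assign (negPf i_in).
Qed.

Lemma sum_draws_dim_weight_baseline g i :
  \sum_(T : {set 'I_K} | #|T| == KT)
     Z T i * dim_weight T i * g i (Z T i) (Z T i)
  = CK * (N%:R^-1 * (g i 1 1 - g i (-1) (-1))).
Proof.
have pointwise T : Z T i * dim_weight T i * g i (Z T i) (Z T i)
    = if c i \in T then NT^-1 * g i 1 1 else - NC^-1 * g i (-1) (-1).
  by rewrite /dim_weight /assign; case: (_ \in _); ring.
under eq_bigr => T _ do rewrite pointwise.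
rewrite sum_draws_ifE card_ord /Defs.NT NCE.
have := N_gt0 i; have := K_gt0; have := KT_gt0; have := K_sub_KT_gt0.
by move=> *; field; rewrite !gt_eqF.
Qed.

Definition interference_error g T i : R :=
  Z T i * dim_weight T i * (outcome w g (Z T) i - g i (Z T i) (Z T i)).

Lemma expected_dim_sub_tau g : expected_dim w c KT g - tau_star g
  = CK^-1 * \sum_(T : {set 'I_K} | #|T| == KT) \sum_i interference_error g T i.
Proof.
rewrite /expected_dim card_draws_classic /interference_error.
under eq_bigr => T _ do rewrite dim_est_assign.
under [in RHS]eq_bigr => T _ do under eq_bigr => i _ do rewrite mulrBr.
under [in RHS]eq_bigr => T _ do rewrite sumrB.
rewrite sumrB [X in _ = _ * (_ - X)]exchange_big /=.
under [X in _ = _ * (_ - X)]eq_bigr => i _ do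
  rewrite sum_draws_dim_weight_baseline.
rewrite -mulr_sumr -mulr_sumr -/(tau_star g) mulrBr mulKf ?gt_eqF ?CK_gt0 //.
by rewrite mulrC.
Qed.

Definition exposure_gap T i : R := dim_weight T i * (1 - Z T i * e T i).

Lemma interference_error_le L g T i : lipschitz_family L g ->
  `|interference_error g T i| <= L * exposure_gap T i.
Proof.
move=> g_lip; rewrite /interference_error /exposure_gap /outcome.
have Zi_norm : `|Z T i| = 1.
  by case: (assign_sign T i) => ->; rewrite ?normrN normr1.
have weight_ge0 := dim_weight_ge0 T i.
rewrite !normrM Zi_norm mul1r ger0_norm // mulrCA; apply: ler_wpM2l => //.
rewrite -(dist_exposure_sign w_ge0 wi_gt0 ws_gt0 (assign_in_range T)
  (assign_sign T i)).
apply: g_lip; first exact: assign_sign.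
  exact: (exposure_in_range w_ge0 wi_gt0 ws_gt0 _ (assign_in_range T)).
exact: assign_in_range.
Qed.

Lemma interference_error_linear L T i :
  interference_error (fun _ _ x => L * x) T i = - (L * exposure_gap T i).
Proof.
rewrite /interference_error /exposure_gap /outcome.
by case: (assign_sign T i) => ->; ring.
Qed.

Lemma dim_weight_mul_disagreement T i j :
  dim_weight T i * (1 - Z T i * Z T j)
  = 2 * (NT^-1 * ((c i \in T) && (c j \notin T))%:R
         + NC^-1 * ((c j \in T) && (c i \notin T))%:R).
Proof.
by rewrite /dim_weight /assign; case: (c i \in T); case: (c j \in T) => /=; ring.
Qed.

Lemma sum_draws_dim_weight_disagreement i j :
  \sum_(T : {set 'I_K} | #|T| == KT) dim_weight T i * (1 - Z T i * Z T j)
  = if c j == c i then 0 else CK * bias_factor.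
Proof.
under eq_bigr => T _ do rewrite dim_weight_mul_disagreement.
have [-> | cji] := eqVneq (c j) (c i).
  by rewrite big1 // => T _; rewrite andbN /= !mulr0 addr0 mulr0.
have cij : c i != c j by rewrite eq_sym.
rewrite -mulr_sumr big_split /= -!mulr_sumr.
rewrite !sum_draws_in_notinE // card_ord /Defs.NT NCE.
have := N_gt0 i; have := K_gt0; have := KT_gt0; have := K_sub_KT_gt0.
have := K_sub1_gt0; have := CK_gt0.
by move=> *; field; rewrite !gt_eqF.
Qed.

Lemma sum_draws_exposure_gap i :
  \sum_(T : {set 'I_K} | #|T| == KT) exposure_gap T i
  = CK * bias_factor * \sum_(j | c j != c i) exposure_weight w i j.
Proof.
rewrite /exposure_gap.
under eq_bigr => T _ do
  rewrite (one_sub_mul_exposure wi_gt0 ws_gt0) mulr_sumr.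
rewrite exchange_big /=.
under eq_bigr => j _ do rewrite (eq_bigr _ (fun T _ => mulrCA _ _ _))
  -mulr_sumr sum_draws_dim_weight_disagreement.
rewrite (bigID (fun j => c j == c i)) /= big1 => [|j ->]; last by rewrite mulr0.
by rewrite add0r mulr_sumr; apply: eq_bigr => j /negPf->; rewrite mulrC.
Qed.

Lemma expected_exposure_gap :
  CK^-1 * \sum_(T : {set 'I_K} | #|T| == KT) \sum_i exposure_gap T i
  = bias_factor * Hc w c.
Proof.
rewrite exchange_big mulr_sumr /Hc mulr_sumr; apply: eq_bigr => i _ /=.
by rewrite sum_draws_exposure_gap -!mulrA mulKf ?gt_eqF ?CK_gt0.
Qed.

Lemma bias_le L g : lipschitz_family L g ->
  bias w c KT g <= bias_factor * L * Hc w c.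
Proof.
move=> g_lip; rewrite /bias expected_dim_sub_tau mulrAC -expected_exposure_gap.
rewrite -mulrA normrM gtr0_norm ?invr_gt0 ?CK_gt0 //.
rewrite ler_pM2l ?invr_gt0 ?CK_gt0 // mulr_suml.
apply: (le_trans (ler_norm_sum _ _ _)); apply: ler_sum => T _.
rewrite mulr_suml; apply: (le_trans (ler_norm_sum _ _ _)).
by apply: ler_sum => i _; rewrite mulrC interference_error_le.
Qed.

Lemma bias_linear L : 0 <= L ->
  bias w c KT (fun _ _ x => L * x) = bias_factor * L * Hc w c.
Proof.
move=> L_ge0; rewrite /bias expected_dim_sub_tau.
under eq_bigr => T _ do under eq_bigr => i _ do
  rewrite interference_error_linear.
under eq_bigr => T _ do rewrite sumrN -mulr_sumr.
rewrite sumrN -mulr_sumr mulrN mulrCA expected_exposure_gap normrN ger0_norm.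
  by rewrite mulrCA mulrA.
rewrite mulr_ge0 // mulr_ge0 ?Hc_ge0 // mulr_ge0 //;
  by apply: divr_ge0; rewrite ?ler0n // ltW // K_sub1_gt0.
Qed.

Lemma worst_biasE L : 0 <= L -> worst_bias w c KT L = bias_factor * L * Hc w c.
Proof.
move=> L_ge0.
have linear_lip : lipschitz_family L (fun (_ : 'I_N) _ x => L * x).
  by move=> i z _ x y _ _; rewrite -mulrBr normrM ger0_norm.
apply/le_anti/andP; split.
  apply: ge_sup.
    by exists (bias w c KT (fun _ _ x => L * x)), (fun _ _ x => L * x).
  by move=> b [g [g_lip ->]]; exact: bias_le.
rewrite -bias_linear //; apply: ub_le_sup; last by exists (fun _ _ x => L * x).
by exists (bias_factor * L * Hc w c) => b [g [g_lip ->]]; exact: bias_le.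
Qed.

End Bias.

Lemma worst_bias_le_eq (R : realType) (N M K KT : nat) (w : 'I_N -> 'I_M -> R)
  (L : R) (w_ge0 : forall i s, 0 <= w i s)
  (wi_gt0 : forall i, 0 < \sum_(s < M) w i s)
  (ws_gt0 : forall s, 0 < \sum_(i < N) w i s)
  (K_ge2 : (2 <= K)%N) (KT_range : (0 < KT < K)%N) (L_gt0 : 0 < L)
  (c c' : 'I_N -> 'I_K) :
  (worst_bias w c KT L <= worst_bias w c' KT L) = (Hc w c <= Hc w c').
Proof.
rewrite !(worst_biasE w_ge0 wi_gt0 ws_gt0 K_ge2 KT_range _ (ltW L_gt0)).
have [N0 | N_gt0] := posnP N.
  have Hc0 c0 : Hc w c0 = 0.
    by rewrite /Hc big1 // => i; have := ltn_ord i; rewrite {2}N0.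
  by rewrite !Hc0 mulr0 lexx.
have N_gt0' : 0 < N%:R :> R by rewrite ltr0n.
have K_gt0 : 0 < K%:R :> R by rewrite ltr0n; lia.
have K1_gt0 : 0 < K%:R - 1 :> R by rewrite subr_gt0 ltr1n.
by rewrite ler_pM2l // mulr_gt0 // mulr_gt0 // divr_gt0.
Qed.

Theorem lemma3 (R : realType) (N M K KT : nat) (w : 'I_N -> 'I_M -> R) (L : R)
  (hw0 : forall i s, 0 <= w i s)
  (hwi : forall i, 0 < \sum_(s < M) w i s)
  (hws : forall s, 0 < \sum_(i < N) w i s)
  (hK : (2 <= K)%N) (hKN : (K %| N)%N) (hKT : (0 < KT < K)%N) (hL : 0 < L) :
  (forall c : 'I_N -> 'I_K, balanced c ->
     forall g, lipschitz_family L g ->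
       bias w c KT g <= 2 / N%:R * (K%:R / (K%:R - 1)) * L * Hc w c)
  /\
  (forall c : 'I_N -> 'I_K, balanced c ->
       bias w c KT (fun _ _ e => L * e)
       = 2 / N%:R * (K%:R / (K%:R - 1)) * L * Hc w c)
  /\
  (forall c : 'I_N -> 'I_K, balanced c ->
     ((forall c' : 'I_N -> 'I_K, balanced c' ->
         worst_bias w c KT L <= worst_bias w c' KT L)
      <->
      (forall c' : 'I_N -> 'I_K, balanced c' -> Hc w c <= Hc w c'))).
Proof.
split; first by move=> c _ g; exact: bias_le.
split; first by move=> c _; exact: bias_linear (ltW hL).
by move=> c _; split=> c_min c' c'_bal; move: (c_min c' c'_bal);
  rewrite worst_bias_le_eq.
Qed.
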